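(* Let $k$ be a field of characteristic $0$ and consider the quiver with vertices $1,2$ and arrows $a$ from $1$ to $2$ and $a^\ast$ from $2$ to $1$, so that in the path algebra $a=e_1ae_2$, $a^\ast=e_2a^\ast e_1$. Let $B=ke_1\oplus ke_2$ and let $A$ be the path algebra with $e_1+aa^\ast$ inverted in $e_1Ae_1$ and $e_2+a^\ast a$ inverted in $e_2Ae_2$. Put \[P=\frac{\partial}{\partial a}\frac{\partial}{\partial a^\ast}+\frac12\Bigl(a\frac{\partial}{\partial a}\frac{\partial}{\partial a^\ast}a^\ast-a^\ast\frac{\partial}{\partial a^\ast}\frac{\partial}{\partial a}a\Bigr)\in(D_BA)_2,\] $\Phi_1=e_1+aa^\ast$, $\Phi_2=(e_2+a^\ast a)^{-1}$, $\Phi=\Phi_1+\Phi_2$. Then $(A,P,\Phi)$ is a (differential) quasi-Hamiltonian algebra: $\{P,P\}\equiv\frac16(E_1^3+E_2^3)\pmod{[D_BA,D_BA]}$ and $\{P,\Phi_i\}=-\frac12(E_i\Phi_i+\Phi_iE_i)$ for $i=1,2$.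
   Context: Inverting means adjoining $I\in e_1Ae_1$, $J\in e_2Ae_2$ with $I(e_1+aa^\ast)=(e_1+aa^\ast)I=e_1$, $J(e_2+a^\ast a)=(e_2+a^\ast a)J=e_2$. Unadorned tensor products are over $k$; $x\in A\otimes A$ is written $x'\otimes x''$. $D_{A/B}=\operatorname{Der}_B(A,A\otimes A)$ (derivations for the outer structure $b(x\otimes y)c=bx\otimes yc$ vanishing on $B$), an $A$-bimodule via the inner structure $(b\delta c)(x)=\delta(x)'c\otimes b\delta(x)''$; $D_BA=T_AD_{A/B}$, graded with $D_{A/B}$ in degree 1. $\frac{\partial}{\partial a},\frac{\partial}{\partial a^\ast}\in D_{A/B}$ are the unique elements with $\frac{\partial a}{\partial a}=e_1\otimes e_2$, $\frac{\partial a^\ast}{\partial a}=0$, $\frac{\partial a^\ast}{\partial a^\ast}=e_2\otimes e_1$, $\frac{\partial a}{\partial a^\ast}=0$; they generate $D_{A/B}$. The Schouten bracket on $D_BA$ is the unique double Gerstenhaber bracket $\{\!\{-,-\}\!\}$ (degree $-1$, with the graded Leibniz rule $\{\!\{x,yz\}\!\}=(-1)^{(|x|-1)|y|}y\{\!\{x,z\}\!\}+\{\!\{x,y\}\!\}z$ for outer multiplication, graded antisymmetry $\{\!\{x,y\}\!\}=-(-1)^{(|x|-1)(|y|-1)}\sigma_{(12)}\{\!\{y,x\}\!\}$, and the graded double Jacobi identity) with $\{\!\{u,v\}\!\}=0$ for $u,v\in A$, $\{\!\{\delta,u\}\!\}=\delta(u)$, and $\{\!\{\frac{\partial}{\partial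 c},\frac{\partial}{\partial d}\}\!\}=0$ for $c,d\in\{a,a^\ast\}$. $\{x,y\}=m(\{\!\{x,y\}\!\})$; $[D_BA,D_BA]$ is the span of graded commutators. $E_i(x)=xe_i\otimes e_i-e_i\otimes e_ix$. *)

(* Concrete model of the localized path algebra A and of
   D_B A = T_A D_{A/B} for the quiver 1 --a--> 2, 2 --a*--> 1. *)
From HB Require Import structures.
From mathcomp Require Import all_boot all_algebra.
From mathcomp Require Import finmap.
From mathcomp.multinomials Require Import monalg.

Set Implicit Arguments.
Unset Strict Implicit.
Unset Printing Implicit Defensive.

Import GRing.Theory.
Local Open Scope ring_scope.

(* Degree-one generators: false = d/da, true = d/da#.
   d/da = e2 (d/da) e1 and d/da# = e1 (d/da#) e2 for the inner structure,
   so the vertex on the left of d/da is 2 and on its right is 1.          *)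
Definition vtx := bool.
Definition v1 : vtx := false.
Definition v2 : vtx := true.
Definition thL (c : bool) : vtx := if c then v1 else v2.
Definition thR (c : bool) : vtx := if c then v2 else v1.

(* Put s_1 := e1 + a a#  (invertible in e1 A e1) and s_2 := e2 + a# a
   (invertible in e2 A e2).  The corner e_p A e_q of A has k-basis
   { s_p^n b_pq : n in Z } with b_11 = e1, b_12 = a, b_21 = a#, b_22 = e2
   (note a s_2 = s_1 a and a# s_1 = s_2 a#).
   A basis word (i, n0, [:: (c1,n1); ...; (cm,nm)], j) of D_B A stands for
      (s^n0 b) theta_c1 (s^n1 b) theta_c2 ... theta_cm (s^nm b)
   where the corner of each slot is forced: the first slot starts at i, the
   last one ends at j, and around theta_c the vertices are thL c / thR c.                               *)
Definition Word := (vtx * int * seq (bool * int) * vtx)%type.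

Definition deg (w : Word) : nat := size w.1.2.

Section DBA.
Variable k : fieldType.

Definition D := {malg k[Word]}.
Definition T2 := {malg k[(Word * Word)%type]}.
Definition T3 := {malg k[(Word * Word * Word)%type]}.

Definition bilin (K1 K2 K3 : choiceType) (f : K1 -> K2 -> {malg k[K3]})
  (x : {malg k[K1]}) (y : {malg k[K2]}) : {malg k[K3]} :=
  \sum_(w <- msupp x) \sum_(w' <- msupp y) (x@_w * y@_w') *: f w w'.
Definition lin (K1 K3 : choiceType) (f : K1 -> {malg k[K3]})
  (x : {malg k[K1]}) : {malg k[K3]} :=
  \sum_(w <- msupp x) x@_w *: f w.

(* left vertex of the last slot, right vertex of the first slot *)
Definition lastL (i : vtx) (l : seq (bool * int)) : vtx :=
  last i (map (fun x => thR x.1) l).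
Definition firstR (l : seq (bool * int)) (j : vtx) : vtx :=
  head j (map (fun x => thL x.1) l).
Definition shiftlast (n0 : int) (l : seq (bool * int)) (d : int)
  : int * seq (bool * int) :=
  match rev l with
  | [::] => (n0 + d, [::])
  | (c, n) :: r => (n0, rcons (rev r) (c, n + d))
  end.

Definition wmul (w w' : Word) : D :=
  let: (i, n0, l, j) := w in
  let: (i', n0', l', j') := w' in
  if j != i' then 0 else
  let p := lastL i l in
  let q := firstR l' j' in
  let base (d : int) : D :=
    let: (m0, ml) := shiftlast n0 l (n0' + d) in << (i, m0, ml ++ l', j') >> in
  (* b_pj b_jq = a a# = s1 - e1  or  a# a = s2 - e2  when p = q <> j *)
  if (p == q) && (p != j) then base 1 - base 0 else base 0.

Definition dmul (x y : D) : D := bilin wmul x y.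

Definition tens (x y : D) : T2 := bilin (fun w w' => << (w, w') >>) x y.
Definition tens3 (t : T2) (z : D) : T3 := bilin (fun ww w => << (ww, w) >>) t z.
Definition omulL (y : D) (t : T2) : T2 :=
  lin (fun ww => tens (dmul y << ww.1 >>) << ww.2 >>) t.
Definition omulR (t : T2) (z : D) : T2 :=
  lin (fun ww => tens << ww.1 >> (dmul << ww.2 >> z)) t.
Definition mult (t : T2) : D := lin (fun ww => wmul ww.1 ww.2) t.

Definition sgnz (z : int) : k := (-1) ^+ `|z|%N.

Definition sigma12 (t : T2) : T2 :=
  lin (fun ww => sgnz ((deg ww.1)%:Z * (deg ww.2)%:Z) *: << (ww.2, ww.1) >>) t.
Definition sigma123 (t : T3) : T3 :=
  lin (fun www => sgnz ((deg www.2)%:Z * (deg www.1.1 + deg www.1.2)%:Z)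
                   *: << (www.2, www.1.1, www.1.2) >>) t.

Definition homog (n : nat) (x : D) : Prop :=
  forall w, x@_w != 0 -> deg w = n.

Definition e (i : vtx) : D := << (i, 0%:Z, [::], i) >>.
Definition spow (i : vtx) (n : int) : D := << (i, n, [::], i) >>.
Definition arA : D := << (v1, 0%:Z, [::], v2) >>.
Definition arAs : D := << (v2, 0%:Z, [::], v1) >>.
Definition dA : D := << (v2, 0%:Z, [:: (false, 0%:Z)], v1) >>.
Definition dAs : D := << (v1, 0%:Z, [:: (true, 0%:Z)], v2) >>.

Definition thetab (c : bool) (p q : vtx) : T2 :=
  if (p == v1) && (q == v2) then (if c then 0 else tens (e v1) (e v2))
  else if (p == v2) && (q == v1) then (if c then tens (e v2) (e v1) else 0)
  else 0.
(* theta_c(s_p) = theta(a) a# + a theta(a#)  or  theta(a#) a + a# theta(a) *)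
Definition thetas (c : bool) (p : vtx) : T2 :=
  if p == v1 then omulR (thetab c v1 v2) arAs + omulL arA (thetab c v2 v1)
  else omulR (thetab c v2 v1) arA + omulL arAs (thetab c v1 v2).
(* theta_c(s_p^n) by the Leibniz rule *)
Definition thetapow (c : bool) (p : vtx) (n : int) : T2 :=
  match n with
  | Posz m => \sum_(i < m) omulR (omulL (spow p i%:Z) (thetas c p))
                                   (spow p (m%:Z - 1 - i%:Z))
  | Negz m => - \sum_(i < m.+1) omulR (omulL (spow p (- (i%:Z + 1))) (thetas c p))
                                      (spow p (- (m.+1%:Z - i%:Z)))
  end.
Definition thetaw (c : bool) (w : Word) : T2 :=
  let: (p, n, l, q) := w in
  if l is [::] then
    omulR (thetapow c p n) << (p, 0%:Z, [::], q) >> + omulL (spow p n) (thetab c p q)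
  else 0.
(* (b theta_c c')(x) = theta_c(x)' c' (x) b theta_c(x)''  (inner structure) *)
Definition evw (w : Word) (x : Word) : T2 :=
  let: (i0, n0, l, j1) := w in
  if l is [:: (c, n1)] then
    let b : D := << (i0, n0, [::], thL c) >> in
    let c' : D := << (thR c, n1, [::], j1) >> in
    lin (fun ww => tens (dmul << ww.1 >> c') (dmul b << ww.2 >>)) (thetaw c x)
  else 0.
Definition ev (delta x : D) : T2 := bilin evw delta x.

Definition brL (br : D -> D -> T2) (x : D) (t : T2) : T3 :=
  lin (fun ww => tens3 (br x << ww.1 >>) << ww.2 >>) t.

Definition double_gerstenhaber (br : D -> D -> T2) : Prop :=
  [/\
      (forall c x y z, br (c *: x + y) z = c *: br x z + br y z
                   /\ br x (c *: y + z) = c *: br x y + br x z),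
      (forall p q x y, homog p x -> homog q y ->
         forall ww, (br x y)@_ww != 0 -> (deg ww.1 + deg ww.2).+1 = (p + q)%N),
      (forall p q x y z, homog p x -> homog q y ->
         br x (dmul y z) =
           sgnz ((p%:Z - 1) * q%:Z) *: omulL y (br x z) + omulR (br x y) z),
      (forall p q x y, homog p x -> homog q y ->
         br x y = - (sgnz ((p%:Z - 1) * (q%:Z - 1)) *: sigma12 (br y x))) &
      (forall p q r x y z, homog p x -> homog q y -> homog r z ->
         brL br x (br y z)
         + sgnz ((p%:Z - 1) * (q + r)%:Z) *: sigma123 (brL br y (br z x))
         + sgnz ((r%:Z - 1) * (p + q)%:Z) *: sigma123 (sigma123 (brL br z (br x y)))
         = 0)].

Definition double_schouten (br : D -> D -> T2) : Prop :=
  [/\ double_gerstenhaber br,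
      (forall u v, homog 0 u -> homog 0 v -> br u v = 0),
      (forall delta u, homog 1 delta -> homog 0 u -> br delta u = ev delta u) &
      [/\ br dA dA = 0, br dA dAs = 0, br dAs dA = 0 & br dAs dAs = 0]].

Definition is_E (i : vtx) (E : D) : Prop :=
  homog 1 E /\
  forall x, homog 0 x -> ev E x = tens (dmul x (e i)) (e i) - tens (e i) (dmul (e i) x).

Definition gcomm (p q : nat) (x y : D) : D :=
  dmul x y - sgnz (p%:Z * q%:Z) *: dmul y x.

Definition onehalf : k := 2%:R^-1.
Definition Pbiv : D :=
  dmul dA dAs
  + onehalf *: (dmul (dmul arA (dmul dA dAs)) arAs - dmul (dmul arAs (dmul dAs dA)) arA).
Definition Phi1 : D := e v1 + dmul arA arAs.
Definition Phi2 : D := spow v2 (-1).               (* (e2 + a# a)^-1 = s_2^-1 *)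

End DBA.

(* Everything is computed in the basis of D_B A formed by the words
   (s^n0 b) theta_c1 (s^n1 b) ... theta_cm (s^nm b).  The double Schouten
   bracket of two monomials in the generators (degree-zero basis words, d/da
   and d/da#) is forced by the graded Leibniz rule, graded antisymmetry and the
   prescribed values on generators, and an element of degree one is determined
   by its values on a and a#, which pins down E_1 and E_2.  Every side of the
   three identities thus becomes a finite rational combination of words, and
   the identities are checked by evaluation; modulo commutators,
   {P,P} - (E_1^3 + E_2^3)/6 is exhibited as an explicit sum of graded
   commutators. *)

From HB Require Import structures.
From mathcomp Require Import all_boot all_algebra.
From mathcomp Require Import finmap.
From mathcomp.multinomials Require Import monalg.

Set Implicit Arguments.
Unset Strict Implicit.
Unset Printing Implicit Defensive.

Import GRing.Theory.
Local Open Scope ring_scope.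

Section RatrPchar0.
Variable k : fieldType.
Hypothesis hk : [pchar k] =i pred0.

Lemma ratr0 : ratr 0 = 0 :> k.
Proof. exact: (ratr_nat k 0). Qed.

Lemma ratr1 : ratr 1 = 1 :> k.
Proof. exact: (ratr_nat k 1). Qed.

Lemma denq_neq0_pchar0 (x : rat) : (denq x)%:~R != 0 :> k.
Proof.
have := denq_gt0 x; case: (denq x) => // n n_gt0.
by rewrite -pmulrn ((pcharf0P _).1 hk) -lt0n.
Qed.

(* rat.v proves these two facts only for numFieldTypes, but the proofs only
   use that denominators are invertible, which holds in characteristic 0. *)
Fact ratr_is_zmod_morphism_pchar0 : zmod_morphism (@ratr k).
Proof.
have nz_den := denq_neq0_pchar0; move=> x y.
apply: (canLR (mulfK (nz_den _))); apply: (mulIf (nz_den x)).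
rewrite mulrAC mulrBl divfK ?nz_den // mulrAC -!rmorphM.
apply: (mulIf (nz_den y)); rewrite mulrAC mulrBl divfK ?nz_den //.
rewrite -!(rmorphM, rmorphB); congr _%:~R; apply: (@intr_inj rat).
rewrite !(rmorphM, rmorphB) /= [_ - _]lock /= -lock !numqE.
by rewrite (mulrAC y) -!mulrBl -mulrA mulrAC !mulrA.
Qed.

Fact ratr_is_monoid_morphism_pchar0 : monoid_morphism (@ratr k).
Proof.
have nz_den := denq_neq0_pchar0.
split=> [|x y]; first by rewrite /ratr divr1.
rewrite /ratr mulrC mulrAC; apply: canLR (mulKf (nz_den _)) _; rewrite !mulrA.
do 2!apply: canRL (mulfK (nz_den _)) _; rewrite -!rmorphM; congr _%:~R.
apply: (@intr_inj rat); rewrite !rmorphM [x * y]lock /= !numqE -lock.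
by rewrite -!mulrA mulrA mulrCA -!mulrA (mulrCA y).
Qed.

Let ratr_rmorphism : {rmorphism rat -> k} :=
  HB.pack (@ratr k)
    (GRing.isZmodMorphism.Build _ _ _ ratr_is_zmod_morphism_pchar0)
    (GRing.isMonoidMorphism.Build _ _ _ ratr_is_monoid_morphism_pchar0).

Lemma ratrD_pchar0 : {morph @ratr k : x y / x + y}.
Proof. exact: (rmorphD ratr_rmorphism). Qed.

Lemma ratrN_pchar0 : {morph @ratr k : x / - x}.
Proof. exact: (rmorphN ratr_rmorphism). Qed.

Lemma ratrM_pchar0 : {morph @ratr k : x y / x * y}.
Proof. exact: (rmorphM ratr_rmorphism). Qed.

Lemma ratrV_pchar0 : {morph @ratr k : x / x^-1}.
Proof. exact: (fmorphV ratr_rmorphism). Qed.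

End RatrPchar0.

Section LinearExtension.
Variable k : fieldType.

Section Linear.
Variables (K1 K2 : choiceType) (f : K1 -> {malg k[K2]}).

Lemma linEw x (dom : {fset K1}) :
  (msupp x `<=` dom)%fset -> lin f x = \sum_(w <- dom) x@_w *: f w.
Proof.
move=> le; rewrite /lin (big_fset_incl _ le) // => w _ /mcoeff_outdom ->.
by rewrite scale0r.
Qed.

Lemma linD x y : lin f (x + y) = lin f x + lin f y.
Proof.
pose dom := (msupp x `|` msupp y)%fset.
rewrite (@linEw (x + y) dom) ?msuppD_le // (@linEw x dom) ?fsubsetUl //.
rewrite (@linEw y dom) ?fsubsetUr // -big_split /=.
by apply: eq_bigr => w _; rewrite mcoeffD scalerDl.
Qed.

Lemma linZ c x : lin f (c *: x) = c *: lin f x.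
Proof.
rewrite (@linEw (c *: x) (msupp x)) ?msuppZ_le // /lin scaler_sumr.
by apply: eq_bigr => w _; rewrite mcoeffZ scalerA.
Qed.

Lemma lin0 : lin f 0 = 0.
Proof. by rewrite /lin msupp0 big_seq_fset0. Qed.

Lemma linN x : lin f (- x) = - lin f x.
Proof. by rewrite -scaleN1r linZ scaleN1r. Qed.

Lemma linU c w : lin f << c *g w >> = c *: f w.
Proof.
by rewrite (@linEw _ [fset w]%fset) ?msuppU_le // big_seq_fset1 mcoeffUU.
Qed.

Lemma mcoeff_lin x v : (lin f x)@_v = \sum_(w <- msupp x) x@_w * (f w)@_v.
Proof. by rewrite /lin raddf_sum; apply: eq_bigr => w _; apply: mcoeffZ. Qed.

End Linear.

Lemma eq_lin (K1 K2 : choiceType) (f g : K1 -> {malg k[K2]}) :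
  f =1 g -> lin f =1 lin g.
Proof. by move=> fg x; apply: eq_bigr => w _; rewrite fg. Qed.

Lemma bilinE (K1 K2 K3 : choiceType) (f : K1 -> K2 -> {malg k[K3]}) x y :
  bilin f x y = lin (fun w => lin (f w) y) x.
Proof.
rewrite /bilin /lin; apply: eq_bigr => w _; rewrite scaler_sumr.
by apply: eq_bigr => w' _; rewrite scalerA.
Qed.

Lemma bilinUU (K1 K2 K3 : choiceType) (f : K1 -> K2 -> {malg k[K3]}) w w' :
  bilin f << w >> << w' >> = f w w'.
Proof. by rewrite bilinE linU scale1r linU scale1r. Qed.

End LinearExtension.

Notation comb K := (seq (rat * K)).

Definition cscale (K : Type) (c : rat) (l : comb K) : comb K :=
  [seq (c * p.1, p.2) | p <- l].
Definition copp (K : Type) (l : comb K) : comb K := cscale (-1) l.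
Definition clin (K1 K2 : Type) (g : K1 -> comb K2) (l : comb K1) : comb K2 :=
  flatten [seq cscale p.1 (g p.2) | p <- l].
Definition cbilin (K1 K2 K3 : Type) (g : K1 -> K2 -> comb K3) l l' : comb K3 :=
  clin (fun w => clin (g w) l') l.

Definition ccoef (K : eqType) (w : K) (l : comb K) : rat :=
  foldr (fun p acc => if p.2 == w then p.1 + acc else acc) 0 l.
Definition czero (K : eqType) (l : comb K) : bool :=
  all (fun w => ccoef w l == 0) (map snd l).

Lemma ccoef_supp (K : eqType) (l : comb K) w : ccoef w l != 0 -> w \in map snd l.
Proof.
elim: l => [|p l IH] //=; rewrite in_cons (eq_sym w).
by case: (p.2 == w) => //= /IH ->; rewrite orbT.
Qed.

Section DoubleBrackets.
Variable k : fieldType.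
Hypothesis hk : [pchar k] =i pred0.

(* A formal combination [:: (c_1, w_1); ...] stands for c_1 w_1 + ...; every
   operation X on D_B A has a computable counterpart cX on formal combinations
   with X (cval l) = cval (cX l), so identities in D_B A reduce to vm_compute. *)
Definition cval (K : choiceType) (l : comb K) : {malg k[K]} :=
  \sum_(p <- l) << ratr p.1 *g p.2 >>.

Section Combinations.
Variable K : choiceType.
Implicit Types l : comb K.

Lemma cval_nil : cval ([::] : comb K) = 0.
Proof. by rewrite /cval big_nil. Qed.

Lemma cval_cons p l : cval (p :: l) = << ratr p.1 *g p.2 >> + cval l.
Proof. by rewrite /cval big_cons. Qed.

Lemma cval_cat l1 l2 : cval (l1 ++ l2) = cval l1 + cval l2.
Proof. by rewrite /cval big_cat. Qed.

Lemma cval1 (w : K) : cval [:: (1, w)] = << w >>.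
Proof. by rewrite cval_cons cval_nil addr0 ratr1. Qed.

Lemma cval_scale c l : cval (cscale c l) = ratr c *: cval l.
Proof.
rewrite /cval big_map scaler_sumr; apply: eq_bigr => p _.
by apply/malgP => w; rewrite mcoeffZ !mcoeffU mulrnAr (ratrM_pchar0 hk).
Qed.

Lemma cval_opp l : cval (copp l) = - cval l.
Proof. by rewrite cval_scale (ratrN_pchar0 hk) ratr1 scaleN1r. Qed.

Lemma mcoeff_cval l w : (cval l)@_w = ratr (ccoef w l).
Proof.
elim: l => [|p l IH]; first by rewrite cval_nil mcoeff0 ratr0.
rewrite cval_cons mcoeffD IH mcoeffU /=.
by case: (p.2 == w); rewrite ?(ratrD_pchar0 hk) ?add0r.
Qed.

Lemma cval_eq0 l : czero l -> cval l = 0.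
Proof.
move=> /allP l0; apply/malgP => w; rewrite mcoeff_cval mcoeff0.
have [->|/ccoef_supp/l0/eqP->] := eqVneq (ccoef w l) 0; exact: ratr0.
Qed.

Lemma cval_eq l1 l2 : czero (l1 ++ copp l2) -> cval l1 = cval l2.
Proof. by move/cval_eq0/eqP; rewrite cval_cat cval_opp subr_eq0 => /eqP. Qed.

Lemma big_cval (I : Type) (r : seq I) (G : I -> comb K) :
  \sum_(i <- r) cval (G i) = cval (flatten [seq G i | i <- r]).
Proof.
elim: r => [|i r IH]; first by rewrite big_nil cval_nil.
by rewrite big_cons IH cval_cat.
Qed.

End Combinations.

Lemma cval_clin (K1 K2 : choiceType) (g : K1 -> comb K2) l :
  cval (clin g l) = \sum_(p <- l) ratr p.1 *: cval (g p.2).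
Proof.
rewrite -big_cval; apply: eq_bigr => p _; exact: cval_scale.
Qed.

Lemma lin_cval (K1 K2 : choiceType) (f : K1 -> {malg k[K2]}) g l :
  (forall w, f w = cval (g w)) -> lin f (cval l) = cval (clin g l).
Proof.
move=> fg; rewrite cval_clin /cval.
elim: l => [|p l IH]; first by rewrite !big_nil lin0.
by rewrite !big_cons linD IH linU fg.
Qed.

Lemma bilin_cval (K1 K2 K3 : choiceType) (f : K1 -> K2 -> {malg k[K3]}) g l l' :
  (forall w w', f w w' = cval (g w w')) ->
  bilin f (cval l) (cval l') = cval (cbilin g l l').
Proof. by move=> fg; rewrite bilinE; apply: lin_cval => w; exact: lin_cval. Qed.

Definition wA : Word := (v1, 0%:Z, [::], v2).
Definition wAs : Word := (v2, 0%:Z, [::], v1).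
Definition wdA : Word := (v2, 0%:Z, [:: (false, 0%:Z)], v1).
Definition wdAs : Word := (v1, 0%:Z, [:: (true, 0%:Z)], v2).
Definition ws (i : vtx) (n : int) : Word := (i, n, [::], i).

Definition csgn (z : int) : rat := if odd `|z|%N then -1 else 1.

Definition cwmul (w w' : Word) : comb Word :=
  let: (i, n0, l, j) := w in
  let: (i', n0', l', j') := w' in
  if j != i' then [::] else
  let p := lastL i l in
  let q := firstR l' j' in
  let base (d : int) : comb Word :=
    let: (m0, ml) := shiftlast n0 l (n0' + d) in [:: (1, (i, m0, ml ++ l', j'))] in
  if (p == q) && (p != j) then base 1 ++ copp (base 0) else base 0.

Definition cdmul := cbilin cwmul.
Definition ctens (l l' : comb Word) : comb (Word * Word) :=
  cbilin (fun w w' => [:: (1, (w, w'))]) l l'.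
Definition comulL (l : comb Word) (t : comb (Word * Word)) : comb (Word * Word) :=
  clin (fun ww => ctens (cdmul l [:: (1, ww.1)]) [:: (1, ww.2)]) t.
Definition comulR (t : comb (Word * Word)) (l : comb Word) : comb (Word * Word) :=
  clin (fun ww => ctens [:: (1, ww.1)] (cdmul [:: (1, ww.2)] l)) t.
Definition cmult (t : comb (Word * Word)) : comb Word := clin (fun ww => cwmul ww.1 ww.2) t.
Definition csigma12 (t : comb (Word * Word)) : comb (Word * Word) :=
  clin (fun ww => [:: (csgn ((deg ww.1)%:Z * (deg ww.2)%:Z), (ww.2, ww.1))]) t.

Definition cthetab (c : bool) (p q : vtx) : comb (Word * Word) :=
  if (p == v1) && (q == v2) then (if c then [::] else [:: (1, (ws v1 0, ws v2 0))])
  else if (p == v2) && (q == v1) then (if c then [:: (1, (ws v2 0, ws v1 0))] else [::])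
  else [::].
Definition cthetas (c : bool) (p : vtx) : comb (Word * Word) :=
  if p == v1 then comulR (cthetab c v1 v2) [:: (1, wAs)] ++ comulL [:: (1, wA)] (cthetab c v2 v1)
  else comulR (cthetab c v2 v1) [:: (1, wA)] ++ comulL [:: (1, wAs)] (cthetab c v1 v2).
Definition cthetapow (c : bool) (p : vtx) (n : int) : comb (Word * Word) :=
  match n with
  | Posz m => flatten [seq comulR (comulL [:: (1, ws p i%:Z)] (cthetas c p))
                                  [:: (1, ws p (m%:Z - 1 - i%:Z))] | i <- iota 0 m]
  | Negz m => copp (flatten [seq comulR (comulL [:: (1, ws p (- (i%:Z + 1)))] (cthetas c p))
                                  [:: (1, ws p (- (m.+1%:Z - i%:Z)))] | i <- iota 0 m.+1])
  end.
Definition cthetaw (c : bool) (w : Word) : comb (Word * Word) :=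
  let: (p, n, l, q) := w in
  if l is [::] then
    comulR (cthetapow c p n) [:: (1, (p, 0%:Z, [::], q))] ++ comulL [:: (1, ws p n)] (cthetab c p q)
  else [::].
Definition cevw (w x : Word) : comb (Word * Word) :=
  let: (i0, n0, l, j1) := w in
  if l is [:: (c, n1)] then
    clin (fun ww => ctens (cdmul [:: (1, ww.1)] [:: (1, (thR c, n1, [::], j1))])
                          (cdmul [:: (1, (i0, n0, [::], thL c))] [:: (1, ww.2)])) (cthetaw c x)
  else [::].

Lemma scale_cval (K : choiceType) c (l : comb K) : ratr c *: cval l = cval (cscale c l).
Proof. by rewrite cval_scale. Qed.

Lemma wmul_cval w w' : wmul k w w' = cval (cwmul w w').
Proof.
move: w w' => [[[i n0] l] j] [[[i' n0'] l'] j']; rewrite /wmul /cwmul.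
case: (j != i'); first by rewrite cval_nil.
case: ifP => _; rewrite ?cval_cat ?cval_opp //.
  by case: (shiftlast n0 l (n0' + 1)) => ? ?; case: (shiftlast n0 l (n0' + 0)) => ? ?;
     rewrite !cval1.
by case: (shiftlast n0 l (n0' + 0)) => ? ?; rewrite !cval1.
Qed.

Lemma dmul_cval l l' : dmul (cval l) (cval l') = cval (cdmul l l').
Proof. by apply: bilin_cval => w w'; rewrite wmul_cval. Qed.

Lemma tens_cval l l' : tens (cval l) (cval l') = cval (ctens l l').
Proof. by apply: bilin_cval => w w'; rewrite cval1. Qed.

Lemma omulL_cval l t : omulL (cval l) (cval t) = cval (comulL l t).
Proof. by apply: lin_cval => ww; rewrite -!cval1 dmul_cval tens_cval. Qed.

Lemma omulR_cval t l : omulR (cval t) (cval l) = cval (comulR t l).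
Proof. by apply: lin_cval => ww; rewrite -!cval1 dmul_cval tens_cval. Qed.

Lemma mult_cval t : mult (cval t) = cval (cmult t).
Proof. by apply: lin_cval => ww; rewrite wmul_cval. Qed.

Lemma sgnz_ratr z : sgnz k z = ratr (csgn z).
Proof.
by rewrite /sgnz /csgn -signr_odd; case: odd; rewrite ?(ratrN_pchar0 hk) ratr1.
Qed.

Lemma sigma12_cval t : sigma12 (cval t) = cval (csigma12 t).
Proof.
apply: lin_cval => ww; rewrite sgnz_ratr -cval1 scale_cval.
by rewrite /cscale /= mulr1.
Qed.

Lemma thetab_cval c p q : thetab k c p q = cval (cthetab c p q).
Proof.
rewrite /thetab /cthetab /e.
by do 2?case: ifP => _; case: c; rewrite ?cval_nil // -!cval1 tens_cval.
Qed.

Lemma thetas_cval c p : thetas k c p = cval (cthetas c p).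
Proof.
rewrite /thetas /cthetas /arA /arAs; case: ifP => _;
  by rewrite cval_cat !thetab_cval -!cval1 omulR_cval omulL_cval.
Qed.

Lemma thetapow_cval c p n : thetapow k c p n = cval (cthetapow c p n).
Proof.
have iotaE m : iota 0 m = index_iota 0 m by rewrite /index_iota subn0.
rewrite /thetapow /cthetapow /spow.
case: n => m; rewrite ?cval_opp -big_cval iotaE big_mkord; [|congr (- _)];
  by apply: eq_bigr => i _; rewrite thetas_cval -!cval1 omulL_cval omulR_cval.
Qed.

Lemma thetaw_cval c w : thetaw k c w = cval (cthetaw c w).
Proof.
move: w => [[[p n] [|? ?]] q]; rewrite /thetaw /cthetaw ?cval_nil //.
by rewrite cval_cat thetapow_cval thetab_cval /spow -!cval1 omulL_cval omulR_cval.
Qed.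

Lemma evw_cval w x : evw k w x = cval (cevw w x).
Proof.
move: w => [[[i0 n0] [|[c n1] [|? ?]]] j1]; rewrite /evw /cevw ?cval_nil //.
rewrite thetaw_cval; apply: lin_cval => ww.
by rewrite -!cval1 !dmul_cval tens_cval.
Qed.

Lemma ev_cval l l' : ev (cval l) (cval l') = cval (cbilin cevw l l').
Proof. by apply: bilin_cval => w w'; rewrite evw_cval. Qed.

Lemma shiftlast_size n0 (l : seq (bool * int)) d : size (shiftlast n0 l d).2 = size l.
Proof.
rewrite /shiftlast -[in RHS](revK l) size_rev.
by case: (rev l) => [|[c n] r] //=; rewrite size_rcons size_rev.
Qed.

Lemma all_cscale (K : Type) (P : K -> bool) c (l : comb K) :
  all (fun q => P q.2) (cscale c l) = all (fun q => P q.2) l.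
Proof. by rewrite /cscale all_map. Qed.

Lemma all_clin (K1 K2 : eqType) (P : K2 -> bool) (g : K1 -> comb K2) (l : comb K1) :
  (forall p, p \in l -> all (fun q => P q.2) (g p.2)) -> all (fun q => P q.2) (clin g l).
Proof.
elim: l => [|p l IH] gP //=; rewrite all_cat all_cscale gP ?mem_head //=.
by apply: IH => p' lp'; apply: gP; rewrite in_cons lp' orbT.
Qed.

Lemma cwmul_deg w w' : all (fun q => deg q.2 == (deg w + deg w')%N) (cwmul w w').
Proof.
move: w w' => [[[i n0] l] j] [[[i' n0'] l'] j']; rewrite /cwmul /deg /=.
case: (j != i') => //=.
have base d : all (fun q => size q.2.1.2 == (size l + size l')%N)
    (let: (m0, ml) := shiftlast n0 l (n0' + d) in [:: (1, (i, m0, ml ++ l', j'))]).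
  have := shiftlast_size n0 l (n0' + d).
  by case: shiftlast => m0 ml /= sz; rewrite size_cat sz eqxx.
by case: ifP => _; rewrite ?all_cat ?(all_cscale (fun w : Word => size w.1.2 == _)) ?base.
Qed.

Lemma cdmul_deg m n l l' :
  all (fun q => deg q.2 == m) l -> all (fun q => deg q.2 == n) l' ->
  all (fun q => deg q.2 == (m + n)%N) (cdmul l l').
Proof.
move=> /allP lm /allP l'n.
apply: (all_clin (P := fun w : Word => deg w == (m + n)%N)) => p /lm /eqP <-.
apply: (all_clin (P := fun w : Word => deg w == _)) => p' /l'n /eqP <-.
exact: cwmul_deg.
Qed.

Lemma homog_cval n l : all (fun p => deg p.2 == n) l -> homog n (cval l).
Proof.
move=> /allP ln w; rewrite mcoeff_cval.
have [->|] := eqVneq (ccoef w l) 0; first by rewrite ratr0 eqxx.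
by move=> /ccoef_supp /mapP [p /ln /eqP <- ->].
Qed.

Lemma homogU w : homog (deg w) (<< w >> : D k).
Proof. by rewrite -cval1; apply: homog_cval; rewrite /= eqxx. Qed.

Lemma homogZ n c (x : D k) : homog n x -> homog n (c *: x).
Proof. by move=> xn w; rewrite mcoeffZ mulf_eq0 negb_or => /andP[_ /xn]. Qed.

Lemma homogB n (x y : D k) : homog n x -> homog n y -> homog n (x - y).
Proof.
move=> xn yn w; rewrite mcoeffB.
by have [/xn //|/negbNE/eqP->] := boolP (x@_w != 0); rewrite sub0r oppr_eq0 => /yn.
Qed.

Fixpoint prodw (x : Word) (xs : seq Word) : D k :=
  if xs is y :: ys then dmul << x >> (prodw y ys) else << x >>.
Fixpoint cprodw (x : Word) (xs : seq Word) : comb Word :=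
  if xs is y :: ys then cdmul [:: (1, x)] (cprodw y ys) else [:: (1, x)].
Definition degw (x : Word) (xs : seq Word) : nat := (deg x + sumn (map deg xs))%N.

Lemma prodw_cval x xs : prodw x xs = cval (cprodw x xs).
Proof.
elim: xs x => [|y ys IH] x /=; first by rewrite cval1.
by rewrite IH -cval1 dmul_cval.
Qed.

Lemma homog_prodw x xs : homog (degw x xs) (prodw x xs).
Proof.
rewrite prodw_cval; apply: homog_cval; rewrite /degw.
elim: xs x => [|y ys IH] x /=; first by rewrite addn0 eqxx.
by apply: cdmul_deg; rewrite /= ?eqxx.
Qed.

Notation monomial := (Word * seq Word)%type.

Definition mval (m : comb monomial) : D k := \sum_(p <- m) ratr p.1 *: prodw p.2.1 p.2.2.
Definition cmval (m : comb monomial) : comb Word := clin (fun p => cprodw p.1 p.2) m.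

Lemma mval_cval m : mval m = cval (cmval m).
Proof. by rewrite cval_clin; apply: eq_bigr => p _; rewrite prodw_cval. Qed.

Local Ltac reify :=
  rewrite /dA /dAs /arA /arAs /e /spow -?cval1;
  repeat progress rewrite ?(mval_cval, dmul_cval, tens_cval, omulL_cval, omulR_cval,
    mult_cval, sigma12_cval, ev_cval, sgnz_ratr, scale_cval) -?cval_cat -?cval_opp.

Lemma dmulU w w' : dmul << w >> << w' >> = wmul k w w'.
Proof. exact: bilinUU. Qed.

Lemma tensU w w' : tens << w >> << w' >> = << (w, w') >> :> T2 k.
Proof. exact: bilinUU. Qed.

Definition warrow (c : bool) : Word := if c then wAs else wA.
Definition letter (w : Word) : bool := (head (false, 0) w.1.2).1.
(* For w = b theta_c c', the tensor (b theta_c c')(warrow c) = c' (x) b. *)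
Definition evkey (c : bool) (w : Word) : Word * Word :=
  let: (i0, n0, l, j1) := w in
  let n1 := (head (false, 0) l).2 in
  if c then ((v2, n1, [::], j1), (i0, n0, [::], v1))
  else ((v1, n1, [::], j1), (i0, n0, [::], v2)).

Lemma evw_warrow c w : deg w = 1%N ->
  evw k w (warrow c) = if letter w == c then << evkey c w >> else 0.
Proof.
have thetaw_warrow c' :
    cthetaw c' (warrow c) = if c' == c then [:: (1, (ws c 0, ws (~~ c) 0))] else [::].
  by case: c; case: c'; vm_compute.
move: w => [[[i0 n0] [|[c' n1] [|? ?]]] j1] // _.
rewrite /evw thetaw_cval thetaw_warrow /letter /=.
clear thetaw_warrow; case: c c' => -[] //; rewrite ?cval_nil ?lin0 // cval1 linU scale1r !dmulU;
  by case: i0; case: j1; rewrite /wmul /= ?addr0 ?add0r tensU.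
Qed.

Lemma evkey_inj c w w' : deg w = 1%N -> deg w' = 1%N ->
  letter w = c -> letter w' = c -> evkey c w = evkey c w' -> w = w'.
Proof.
move: w w' => [[[i0 n0] [|[c0 n1] [|? ?]]] j1] [[[i0' n0'] [|[c0' n1'] [|? ?]]] j1'] //= _ _.
by rewrite /letter /= => <- <-; case: c0 c0' => -[] //= [-> -> -> ->].
Qed.

Lemma evU (X : D k) w : ev X << w >> = lin (fun w' => evw k w' w) X.
Proof. by rewrite /ev bilinE; apply: eq_lin => w'; rewrite linU scale1r. Qed.

Lemma ev_inj (X : D k) : homog 1 X -> ev X << wA >> = 0 -> ev X << wAs >> = 0 -> X = 0.
Proof.
move=> X1 XA XAs; apply/malgP => w; rewrite mcoeff0; apply/eqP/negPn/negP => Xw.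
have Xc c : ev X << warrow c >> = 0 by case: c; [exact: XAs | exact: XA].
have wX : w \in msupp X by rewrite -mcoeff_neq0.
move: (congr1 (mcoeff (evkey (letter w) w)) (Xc (letter w))).
rewrite evU mcoeff_lin mcoeff0 (bigD1_seq w) ?fset_uniq //= big1_seq ?addr0.
  by rewrite evw_warrow ?X1 // eqxx mcoeffUU mulr1 => /eqP; rewrite (negbTE Xw).
move=> w' /andP[w'w w'X]; have Xw' : X@_w' != 0 by rewrite mcoeff_neq0.
rewrite evw_warrow ?X1 //; case: eqP => [lw'|_]; last by rewrite mcoeff0 mulr0.
rewrite mcoeffU; case: eqP => [/evkey_inj eqw|_]; last by rewrite mulr0.
by move: w'w; rewrite eqw ?X1 ?eqxx.
Qed.

Definition Evec (i : vtx) : D k :=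
  if i == v1 then dmul (dAs k) (arAs k) - dmul (arA k) (dA k)
  else dmul (dA k) (arA k) - dmul (arAs k) (dAs k).

Lemma ev_subl (x y z : D k) : ev (x - y) z = ev x z - ev y z.
Proof. by rewrite /ev !bilinE linD linN. Qed.

Lemma is_E_Evec i E : is_E i E -> E = Evec i.
Proof.
case: i => -[E1 evE]; apply/eqP; rewrite -subr_eq0; apply/eqP.
all: apply: ev_inj; [apply: homogB E1 _ | rewrite ev_subl evE; last exact: homogU ..].
all: rewrite /Evec [_ == v1]/=; reify.
all: by first [apply: homog_cval | apply: cval_eq0]; vm_compute.
Qed.

Definition gen (w : Word) : bool := (deg w == 0)%N || (w \in [:: wdA; wdAs]).

Definition cbr_gen (x y : Word) : comb (Word * Word) :=
  match deg x, deg y with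
  | S O, O => cevw x y
  | O, S O => copp (csigma12 (cevw y x))
  | _, _ => [::]
  end.

Fixpoint cleibniz (p : nat) (base : Word -> comb (Word * Word)) (y : Word) (ys : seq Word) :
    comb (Word * Word) :=
  if ys is z :: zs then
    cscale (csgn ((p%:Z - 1) * (deg y)%:Z)) (comulL [:: (1, y)] (cleibniz p base z zs))
    ++ comulR (base y) (cprodw z zs)
  else base y.

Definition cbr_prod_gen (x : Word) (xs : seq Word) (y : Word) : comb (Word * Word) :=
  copp (cscale (csgn (((degw x xs)%:Z - 1) * ((deg y)%:Z - 1)))
    (csigma12 (cleibniz (deg y) (cbr_gen y) x xs))).

Definition cbr_prod (x : Word) (xs : seq Word) (y : Word) (ys : seq Word) : comb (Word * Word) :=
  cleibniz (degw x xs) (cbr_prod_gen x xs) y ys.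

Definition all_gen (m : comb monomial) : bool := all (fun p => all gen (p.2.1 :: p.2.2)) m.

Definition cbr_comb (m m' : comb monomial) : comb (Word * Word) :=
  cbilin (fun p q => cbr_prod p.1 p.2 q.1 q.2) m m'.

Definition mPbiv : comb monomial :=
  [:: (1, (wdA, [:: wdAs])); (1 / 2, (wA, [:: wdA; wdAs; wAs]));
      (-1 / 2, (wAs, [:: wdAs; wdA; wA]))].
Definition mPhi1 : comb monomial := [:: (1, (ws v1 0, [::])); (1, (wA, [:: wAs]))].
Definition mPhi2 : comb monomial := [:: (1, (ws v2 (-1), [::]))].

Lemma onehalf_ratr : onehalf k = ratr 2^-1.
Proof. by rewrite /onehalf (ratrV_pchar0 hk) ratr_nat. Qed.

Lemma Pbiv_mval : Pbiv k = mval mPbiv.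
Proof. by rewrite /Pbiv onehalf_ratr; reify; apply: cval_eq; vm_compute. Qed.

Lemma Phi1_mval : Phi1 k = mval mPhi1.
Proof. by rewrite /Phi1; reify; apply: cval_eq; vm_compute. Qed.

Lemma Phi2_mval : Phi2 k = mval mPhi2.
Proof. by rewrite /Phi2; reify; apply: cval_eq; vm_compute. Qed.

Definition comm_witness : comb (Word * Word) := [::
  (5 / 12, (wA, (v2, 0, [:: (false, 0); (true, 0); (false, 0)], v1)));
  (-5 / 12, (ws v1 0, (v1, 0, [:: (true, 0); (false, 0); (true, 0)], v1)));
  (11 / 12, (wAs, (v1, 0, [:: (true, 0); (false, 0); (true, 0)], v2)));
  (-11 / 12, (ws v2 0, (v2, 0, [:: (false, 0); (true, 0); (false, 0)], v2)));
  (1 / 3, (ws v2 0, (v2, 0, [:: (false, 0); (false, 0); (true, 0)], v2)));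
  (-1 / 3, (ws v2 0, (v2, 0, [:: (false, 0); (true, 0); (true, 0)], v2)));
  (1 / 12, (wA, (v2, 0, [:: (false, 0); (true, 1); (false, 0)], v1)));
  (1 / 12, (wA, (v2, 0, [:: (false, 0); (false, 0); (true, 0)], v1)));
  (-1 / 12, (wA, (v2, 0, [:: (false, 0); (true, 0); (true, 0)], v1)));
  (-1 / 12, (ws v1 0, (v1, 0, [:: (true, 1); (false, 0); (true, 0)], v1)));
  (1 / 12, (wAs, (v1, 0, [:: (true, 0); (false, 1); (true, 0)], v2)));
  (1 / 12, (wAs, (v1, 0, [:: (true, 0); (true, 0); (false, 0)], v2)));
  (-1 / 12, (wAs, (v1, 0, [:: (true, 0); (false, 0); (false, 0)], v2)));
  (-1 / 12, (ws v2 0, (v2, 0, [:: (false, 1); (true, 0); (false, 0)], v2)));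
  (-1 / 6, (ws v1 0, (v1, 0, [:: (true, 0); (true, 0); (true, 0)], v1)));
  (1 / 6, (ws v1 0, (v1, 0, [:: (true, 0); (true, 1); (false, 0)], v1)));
  (-1 / 6, (ws v1 0, (v1, 0, [:: (true, 0); (true, 0); (false, 0)], v1)));
  (-1 / 6, (ws v1 0, (v1, 0, [:: (true, 1); (false, 0); (false, 0)], v1)));
  (1 / 6, (ws v1 0, (v1, 0, [:: (true, 0); (false, 0); (false, 0)], v1)));
  (1 / 6, (wA, (v2, 0, [:: (false, 0); (false, 0); (false, 0)], v1)));
  (-1 / 6, (ws v2 0, (v2, 0, [:: (false, 0); (false, 0); (false, 0)], v2)));
  (1 / 6, (ws v2 0, (v2, 0, [:: (false, 0); (false, 1); (true, 0)], v2)));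
  (-1 / 6, (ws v2 0, (v2, 0, [:: (false, 1); (true, 0); (true, 0)], v2)));
  (1 / 6, (wAs, (v1, 0, [:: (true, 0); (true, 0); (true, 0)], v2)));
  (-1 / 2, (wdA, (v1, 0, [:: (true, 0); (false, 0)], v2)));
  (1 / 4, (wdAs, (v2, 0, [:: (false, 0); (true, 0)], v1)));
  (1 / 12, (wdA, (v1, 0, [:: (true, 1); (false, 0)], v2)));
  (1 / 12, ((v1, 0, [:: (true, 1)], v2), (v2, 0, [:: (false, 0); (true, 0)], v1)));
  (1 / 6, (wdAs, (v2, 0, [:: (false, 1); (true, 0)], v1)));
  (1 / 12, ((v1, 0, [:: (true, 0)], v1), (v1, 0, [:: (true, 0); (false, 1)], v1)));
  (-1 / 4, ((v1, 0, [:: (true, 0)], v1), (v1, 0, [:: (true, 0); (false, 0)], v1)));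
  (-1 / 6, (wdAs, (v2, 0, [:: (false, 0); (false, 1)], v1)));
  (-1 / 4, (wdAs, (v2, 0, [:: (false, 0); (false, 0)], v1)));
  (-1 / 12, ((v2, 0, [:: (false, 1)], v1), (v1, 0, [:: (true, 0); (false, 0)], v2)));
  (1 / 6, ((v1, 0, [:: (true, 0)], v1), (v1, 0, [:: (true, 1); (false, 0)], v1)));
  (-1 / 12, ((v1, 0, [:: (true, 1)], v2), (v2, 0, [:: (false, 0); (false, 0)], v1)))].

Definition cgcomm (t : rat * (Word * Word)) : comb Word :=
  cdmul (cscale t.1 [:: (1, t.2.1)]) [:: (1, t.2.2)]
  ++ copp (cscale (csgn ((deg t.2.1)%:Z * (deg t.2.2)%:Z))
                  (cdmul [:: (1, t.2.2)] (cscale t.1 [:: (1, t.2.1)]))).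

Lemma sum_gcomm_cval (s : comb (Word * Word)) :
  \sum_(t <- s) gcomm (deg t.2.1) (deg t.2.2) (ratr t.1 *: << t.2.1 >>) << t.2.2 >>
  = cval (flatten [seq cgcomm t | t <- s]).
Proof. by rewrite -big_cval; apply: eq_bigr => t _; rewrite /gcomm; reify. Qed.

Section Bracket.
Variable br : D k -> D k -> T2 k.
Hypothesis hbr : double_schouten br.

Lemma brDZl c x y z : br (c *: x + y) z = c *: br x z + br y z.
Proof. by case: hbr => -[/(_ c x y z)[-> _] _ _ _ _] _ _ _. Qed.

Lemma brDZr c x y z : br z (c *: x + y) = c *: br z x + br z y.
Proof. by case: hbr => -[/(_ c z x y)[_ ->] _ _ _ _] _ _ _. Qed.

Lemma br0l z : br 0 z = 0.
Proof.
have h := brDZl 1 0 0 z; rewrite scaler0 addr0 scale1r in h.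
by apply: (addrI (br 0 z)); rewrite addr0 -h.
Qed.

Lemma br0r z : br z 0 = 0.
Proof.
have h := brDZr 1 0 0 z; rewrite scaler0 addr0 scale1r in h.
by apply: (addrI (br z 0)); rewrite addr0 -h.
Qed.

Lemma br_suml (I : Type) (r : seq I) (a : I -> k) (X : I -> D k) y :
  br (\sum_(i <- r) a i *: X i) y = \sum_(i <- r) a i *: br (X i) y.
Proof.
elim: r => [|i r IH]; first by rewrite !big_nil br0l.
by rewrite !big_cons brDZl IH.
Qed.

Lemma br_sumr (I : Type) (r : seq I) (a : I -> k) x (Y : I -> D k) :
  br x (\sum_(i <- r) a i *: Y i) = \sum_(i <- r) a i *: br x (Y i).
Proof.
elim: r => [|i r IH]; first by rewrite !big_nil br0r.
by rewrite !big_cons brDZr IH.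
Qed.

Lemma br_gen x y : gen x -> gen y -> br << x >> << y >> = cval (cbr_gen x y).
Proof.
case: hbr => -[_ _ _ anti _] br00 br10 [brAA brAAs brAsA brAsAs].
have br_ev u v : deg u = 1%N -> deg v = 0%N -> br << u >> << v >> = cval (cevw u v).
  move=> u1 v0; rewrite br10; first by rewrite /ev bilinUU evw_cval.
    by move: (@homogU u); rewrite u1.
  by move: (@homogU v); rewrite v0.
rewrite /gen /cbr_gen !inE => /orP[/eqP x0|/pred2P[]->] /orP[/eqP y0|/pred2P[]->].
- rewrite x0 y0 cval_nil; apply: br00.
    by move: (@homogU x); rewrite x0.
  by move: (@homogU y); rewrite y0.
- rewrite x0 (anti _ _ _ _ (@homogU x) (@homogU wdA)) (br_ev wdA x erefl x0) x0.
  by rewrite subrr mulr0 /sgnz expr0 scale1r sigma12_cval cval_opp.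
- rewrite x0 (anti _ _ _ _ (@homogU x) (@homogU wdAs)) (br_ev wdAs x erefl x0) x0.
  by rewrite subrr mulr0 /sgnz expr0 scale1r sigma12_cval cval_opp.
- by rewrite y0 (br_ev wdA y erefl y0).
- by rewrite cval_nil; exact: brAA.
- by rewrite cval_nil; exact: brAAs.
- by rewrite y0 (br_ev wdAs y erefl y0).
- by rewrite cval_nil; exact: brAsA.
- by rewrite cval_nil; exact: brAsAs.
Qed.

Lemma br_leibniz p X base y ys : homog p X ->
    (forall z, gen z -> br X << z >> = cval (base z)) -> all gen (y :: ys) ->
  br X (prodw y ys) = cval (cleibniz p base y ys).
Proof.
case: hbr => -[_ _ leib _ _] _ _ _ Xp Xbase.
elim: ys y => [|z zs IH] y /andP[gy gzs]; first exact: Xbase.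
rewrite /= (leib _ _ _ _ _ Xp (@homogU y)) (IH z gzs) (Xbase y gy) prodw_cval.
by reify.
Qed.

Lemma br_prodw_gen x xs y : all gen (x :: xs) -> gen y ->
  br (prodw x xs) << y >> = cval (cbr_prod_gen x xs y).
Proof.
case: hbr => -[_ _ _ anti _] _ _ _ gxs gy.
rewrite (anti _ _ _ _ (@homog_prodw x xs) (@homogU y)).
rewrite (br_leibniz (@homogU y) (fun z gz => br_gen gy gz) gxs).
by reify.
Qed.

Lemma br_prodw x xs y ys : all gen (x :: xs) -> all gen (y :: ys) ->
  br (prodw x xs) (prodw y ys) = cval (cbr_prod x xs y ys).
Proof.
by move=> gxs gys; apply: br_leibniz (@homog_prodw x xs) (fun z gz => br_prodw_gen gxs gz) gys.
Qed.

Lemma br_mval m m' : all_gen m -> all_gen m' -> br (mval m) (mval m') = cval (cbr_comb m m').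
Proof.
move=> /allP gm /allP gm'; rewrite /mval /cbr_comb /cbilin br_suml cval_clin.
apply: eq_big_seq => p /gm gp; congr (_ *: _).
rewrite br_sumr cval_clin; apply: eq_big_seq => q /gm' gq; congr (_ *: _).
exact: br_prodw.
Qed.

Lemma bracket_Pbiv_Pbiv E1 E2 : is_E v1 E1 -> is_E v2 E2 ->
  exists s : seq ((nat * D k) * (nat * D k)),
    (forall pr, pr \in s -> homog pr.1.1 pr.1.2 /\ homog pr.2.1 pr.2.2) /\
    mult (br (Pbiv k) (Pbiv k)) - (6%:R)^-1 *: (dmul E1 (dmul E1 E1) + dmul E2 (dmul E2 E2))
    = \sum_(pr <- s) gcomm pr.1.1 pr.2.1 pr.1.2 pr.2.2.
Proof.
move=> /is_E_Evec-> /is_E_Evec->.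
exists [seq ((deg t.2.1, ratr t.1 *: << t.2.1 >>), (deg t.2.2, << t.2.2 >>)) | t <- comm_witness].
split=> [_ /mapP[t _ ->]|]; first by split; [apply: homogZ; apply: homogU | apply: homogU].
rewrite big_map sum_gcomm_cval Pbiv_mval br_mval; [|by []..].
rewrite -(ratr_nat k 6) -(ratrV_pchar0 hk) /Evec [v1 == v1]/= [v2 == v1]/=.
by reify; apply: cval_eq; vm_compute.
Qed.

Lemma bracket_Pbiv_Phi1 E1 : is_E v1 E1 ->
  mult (br (Pbiv k) (Phi1 k)) = - (onehalf k *: (dmul E1 (Phi1 k) + dmul (Phi1 k) E1)).
Proof.
move=> /is_E_Evec->; rewrite Pbiv_mval Phi1_mval br_mval; [|by []..].
rewrite onehalf_ratr /Evec [v1 == v1]/=.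
by reify; apply: cval_eq; vm_compute.
Qed.

Lemma bracket_Pbiv_Phi2 E2 : is_E v2 E2 ->
  mult (br (Pbiv k) (Phi2 k)) = - (onehalf k *: (dmul E2 (Phi2 k) + dmul (Phi2 k) E2)).
Proof.
move=> /is_E_Evec->; rewrite Pbiv_mval Phi2_mval br_mval; [|by []..].
rewrite onehalf_ratr /Evec [v2 == v1]/=.
by reify; apply: cval_eq; vm_compute.
Qed.

End Bracket.

End DoubleBrackets.

Theorem theorem6p5p1 (k : fieldType) (hk : [pchar k] =i pred0)
    (br : D k -> D k -> T2 k) (hbr : double_schouten br)
    (E1 E2 : D k) (hE1 : is_E v1 E1) (hE2 : is_E v2 E2) :
  [/\ (* {P,P} = 1/6 (E1^3 + E2^3)  modulo  [D_B A, D_B A] *)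
      exists s : seq ((nat * D k) * (nat * D k)),
        (forall pr, pr \in s -> homog pr.1.1 pr.1.2 /\ homog pr.2.1 pr.2.2) /\
        mult (br (@Pbiv k) (@Pbiv k))
          - (6%:R)^-1 *: (dmul E1 (dmul E1 E1) + dmul E2 (dmul E2 E2))
        = \sum_(pr <- s) gcomm pr.1.1 pr.2.1 pr.1.2 pr.2.2,
      (* {P,Phi_1} = -1/2 (E_1 Phi_1 + Phi_1 E_1) *)
      mult (br (@Pbiv k) (@Phi1 k))
        = - (@onehalf k *: (dmul E1 (@Phi1 k) + dmul (@Phi1 k) E1)) &
      (* {P,Phi_2} = -1/2 (E_2 Phi_2 + Phi_2 E_2) *)
      mult (br (@Pbiv k) (@Phi2 k))
        = - (@onehalf k *: (dmul E2 (@Phi2 k) + dmul (@Phi2 k) E2))].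
Proof.
split.
- exact (bracket_Pbiv_Pbiv hk hbr hE1 hE2).
- exact (bracket_Pbiv_Phi1 hk hbr hE1).
- exact (bracket_Pbiv_Phi2 hk hbr hE2).
Qed.
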